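(* Let $\mathcal{K}=(\mathcal{R},\mathcal{T})$ be an ME-consistent $\mathcal{ALCP}$ knowledge base over $\mathcal{L}$, $C,D$ concepts and $\kappa\in\mathcal{L}$ a context. There exist two ME-$\mathcal{ALCP}$-models $\mathcal{P},\mathcal{Q}$ of $\mathcal{K}$ with $\mathcal{B}^{s}_{\mathcal{K}}(C\sqsubseteq D\mid\kappa)=\Pr_{\mathcal{P}}(C\sqsubseteq D\mid\kappa)$ and $\mathcal{B}^{c}_{\mathcal{K}}(C\sqsubseteq D\mid\kappa)=\Pr_{\mathcal{Q}}(C\sqsubseteq D\mid\kappa)$.
   Context: $\mathcal{L}$ is a propositional language over a finite set of variables; $\mathrm{Int}(\mathcal{L})$ is the set of truth assignments. A probability distribution over $\mathcal{L}$ is $P:\mathrm{Int}(\mathcal{L})\to[0,1]$ summing to $1$, with $P(\phi)=\sum_{v\models\phi}P(v)$. A probabilistic constraint is $c_0+\sum_{i=1}^k c_i\,\mathsf{p}(\phi_i)\ge 0$ ($c_i\in\mathbb{R}$, $\phi_i\in\mathcal{L}$), satisfied by $P$ iff $c_0+\sum_ic_iP(\phi_i)\ge0$; $\mathrm{Mod}(\mathcal{R})$ is the set of distributions satisfying all constraints in $\mathcal{R}$; for consistent $\mathcal{R}$, $P^{ME}_{\mathcal{R}}$ is the unique maximizer in $\mathrm{Mod}(\mathcal{R})$ of $H(P)=-\sum_vP(v)\log P(v)$. Concepts: $C::=A\mid\neg C\mid C\sqcap C\mid\exists r.C$. An $\mathcal{L}$-GCI is $\langle C\sqsubseteq D:\kappa\rangle$,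 $\kappa\in\mathcal{L}$; an $\mathcal{L}$-TBox is a finite set of them; a KB is $\mathcal{K}=(\mathcal{R},\mathcal{T})$. A possible world $\mathcal{I}=(\Delta^{\mathcal{I}},\cdot^{\mathcal{I}},v^{\mathcal{I}})$ is a classical $\mathcal{ALC}$ interpretation together with $v^{\mathcal{I}}\in\mathrm{Int}(\mathcal{L})$; it models $\langle C\sqsubseteq D:\kappa\rangle$ iff $v^{\mathcal{I}}\not\models\kappa$ or $C^{\mathcal{I}}\subseteq D^{\mathcal{I}}$. An $\mathcal{ALCP}$-interpretation $\mathcal{P}=(\mathfrak{I},P_{\mathfrak{I}})$ is a nonempty finite set of possible worlds with a probability distribution on it; $P^{\mathcal{P}}(v)=\sum_{\mathcal{I}\in\mathfrak{I},v^{\mathcal{I}}=v}P_{\mathfrak{I}}(\mathcal{I})$. $\mathcal{P}$ is an ME-$\mathcal{ALCP}$-model of $\mathcal{K}$ iff all its worlds model every GCI of $\mathcal{T}$ and $P^{\mathcal{P}}=P^{ME}_{\mathcal{R}}$; $\mathrm{Mod}_{ME}(\mathcal{K})$ is the set of these; $\mathcal{K}$ is ME-consistent iff it is nonempty. $\Pr_{\mathcal{P}}(C\sqsubseteq D\mid\kappa)=\big(\sum_{\mathcal{I}\in\mathfrak{I},v^{\mathcal{I}}\models\kappa,C^{\mathcal{I}}\subseteq D^{\mathcal{I}}}P_{\mathfrak{I}}(\mathcal{I})\big)/\big(\sum_{\mathcal{I}\in\mathfrak{I},v^{\mathcal{I}}\models\kappa}P_{\mathfrak{I}}(\mathcal{I})\big)$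 (defined when the denominator is positive). Sceptical degree: $\mathcal{B}^{s}_{\mathcal{K}}(C\sqsubseteq D\mid\kappa)=\inf_{\mathcal{P}\in\mathrm{Mod}_{ME}(\mathcal{K})}\Pr_{\mathcal{P}}(C\sqsubseteq D\mid\kappa)$; credulous degree $\mathcal{B}^{c}_{\mathcal{K}}$: the corresponding supremum. *)

From HB Require Import structures.
From mathcomp Require Import all_boot all_order all_algebra.
From mathcomp Require Import boolp classical_sets reals exp.
From Stdlib Require List.
Set Implicit Arguments. Unset Strict Implicit. Unset Printing Implicit Defensive.
Import Order.TTheory GRing.Theory Num.Theory.
Local Open Scope ring_scope.
Local Open Scope classical_set_scope.

Inductive pform (V : Type) : Type :=
  | FVar : V -> pform V
  | FTop : pform V
  | FBot : pform V
  | FNot : pform V -> pform V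
  | FAnd : pform V -> pform V -> pform V
  | FOr  : pform V -> pform V -> pform V
  | FImp : pform V -> pform V -> pform V.
Arguments FTop {V}. Arguments FBot {V}.

Definition assign (V : finType) := {ffun V -> bool}.

Fixpoint feval (V : finType) (v : assign V) (phi : pform V) : bool :=
  match phi with
  | FVar x => v x
  | FTop => true
  | FBot => false
  | FNot p => ~~ feval v p
  | FAnd p q => feval v p && feval v q
  | FOr p q => feval v p || feval v q
  | FImp p q => feval v p ==> feval v q
  end.

Section Prob.
Variables (R : realType) (V : finType).

Definition is_dist (P : assign V -> R) : Prop :=
  (forall v, 0 <= P v) /\ \sum_(v : assign V) P v = 1.

Definition fprob (P : assign V -> R) (phi : pform V) : R :=
  \sum_(v : assign V | feval v phi) P v.

Record pconstr := PConstr { pc0 : R; pcterms : seq (R * pform V) }.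

Definition psat (P : assign V -> R) (c : pconstr) : Prop :=
  0 <= pc0 c + \sum_(t <- pcterms c) t.1 * fprob P t.2.

Definition in_Mod (Rs : seq pconstr) (P : assign V -> R) : Prop :=
  is_dist P /\ forall c, List.In c Rs -> psat P c.

Definition entropy (P : assign V -> R) : R :=
  - \sum_(v : assign V) (if P v == 0 then 0 else P v * ln (P v)).

Definition is_ME (Rs : seq pconstr) (P : assign V -> R) : Prop :=
  in_Mod Rs P /\ forall Q, in_Mod Rs Q -> entropy Q <= entropy P.
End Prob.

Inductive concept (CN RN : Type) : Type :=
  | CAtom : CN -> concept CN RN
  | CNeg : concept CN RN -> concept CN RN
  | CConj : concept CN RN -> concept CN RN -> concept CN RN
  | CEx : RN -> concept CN RN -> concept CN RN.

Record gci (V : finType) (CN RN : Type) :=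
  GCI { glhs : concept CN RN; grhs : concept CN RN; gctx : pform V }.

Record KB (R : realType) (V : finType) (CN RN : Type) :=
  MkKB { kbR : seq (pconstr R V); kbT : seq (gci V CN RN) }.

Record world (V : finType) (CN RN : Type) := World {
  wdom : Type;
  wdom_ne : inhabited wdom;
  wconc : CN -> set wdom;
  wrole : RN -> wdom -> wdom -> Prop;
  wval : assign V }.
Arguments wconc {V CN RN} w _ _.
Arguments wrole {V CN RN} w _ _ _.

Section ConceptSem.
Variables (V : finType) (CN RN : Type) (I : world V CN RN).
Fixpoint cinterp (C : concept CN RN) : set (wdom I) :=
  match C with
  | CAtom A => wconc I A
  | CNeg C1 => ~` cinterp C1
  | CConj C1 C2 => cinterp C1 `&` cinterp C2
  | CEx r C1 => [set x | exists y, wrole I r x y /\ cinterp C1 y]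
  end.
End ConceptSem.
Arguments cinterp {V CN RN} I C _.

Definition csub (V : finType) (CN RN : Type) (I : world V CN RN)
    (C D : concept CN RN) : Prop := cinterp I C `<=` cinterp I D.

Definition models_gci (V : finType) (CN RN : Type) (I : world V CN RN)
    (g : gci V CN RN) : Prop :=
  ~~ feval (wval I) (gctx g) \/ csub I (glhs g) (grhs g).

(* ALCP-interpretation: a nonempty finite set of (pairwise distinct) possible
   worlds, given as an injectively indexed family, with a probability
   distribution on it *)
Record ALCPinterp (R : realType) (V : finType) (CN RN : Type) := ALCPInterp {
  pidx : finType;
  pworld : pidx -> world V CN RN;
  pworld_inj : injective pworld;
  pprob : pidx -> R;
  pprob_ge0 : forall i, 0 <= pprob i;
  pprob_sum1 : \sum_(i : pidx) pprob i = 1 }.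
Arguments pidx {R V CN RN} a.
Arguments pworld {R V CN RN} a _.
Arguments pprob {R V CN RN} a _.

Section Sem.
Variables (R : realType) (V : finType) (CN RN : Type).
Implicit Types (P : ALCPinterp R V CN RN) (K : KB R V CN RN).

Definition marg P (v : assign V) : R :=
  \sum_(i : pidx P | wval (pworld P i) == v) pprob P i.

Definition ME_model K P : Prop :=
  (forall (i : pidx P) g, List.In g (kbT K) -> models_gci (pworld P i) g) /\ is_ME (kbR K) (marg P).

Definition ME_consistent K : Prop := exists P, ME_model K P.

(* Pr_P(C ⊑ D | kappa); division by 0 yields 0 (MathComp convention) *)
Definition PrCond P (C D : concept CN RN) (kappa : pform V) : R :=
  (\sum_(i : pidx P | feval (wval (pworld P i)) kappa && `[< csub (pworld P i) C D >])
      pprob P i)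
  / (\sum_(i : pidx P | feval (wval (pworld P i)) kappa) pprob P i).

Definition deg_values K (C D : concept CN RN) (kappa : pform V) : set R :=
  [set r | exists P, ME_model K P /\ r = PrCond P C D kappa].

Definition Bs K C D kappa : R := inf (deg_values K C D kappa).
Definition Bc K C D kappa : R := sup (deg_values K C D kappa).
End Sem.

(* Since x ln x is strictly convex, the maximum entropy distribution is unique,
   so all ME-models of K share the marginal m := P^ME_R on truth assignments.
   The probability Pr(C ⊑ D | kappa) of an ME-model is then determined by which
   of its worlds satisfy C ⊑ D, and for each assignment v the only freedom is the
   choice of a T-world with valuation v.  Choosing, for every T-realizable v, a
   world violating C ⊑ D whenever one exists gives an ME-model whose probability
   is a lower bound for all ME-models; choosing one satisfying C ⊑ D whenever one
   exists gives an upper bound.  Both bounds are attained, hence are the infimum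
   and supremum. *)

From mathcomp Require Import all_boot all_order all_algebra.
From mathcomp Require Import boolp classical_sets reals exp.
From mathcomp Require Import lra.
Set Implicit Arguments. Unset Strict Implicit. Unset Printing Implicit Defensive.
Import Order.TTheory GRing.Theory Num.Theory.
Local Open Scope ring_scope.

Section MaxEntropyUnique.
Variables (R : realType) (V : finType).

Definition xlnx (x : R) : R := if x == 0 then 0 else x * ln x.

Lemma entropyE (P : assign V -> R) : entropy P = - \sum_v xlnx (P v).
Proof. by []. Qed.

Lemma ln_lt_subr1 (z : R) : 0 < z -> z != 1 -> ln z < z - 1.
Proof.
move=> z_gt0 z_neq1; have ln_neq0 : ln z != 0 by rewrite ln_eq0.
have := expR_gt1Dx ln_neq0; rewrite lnK ?posrE //; lra.
Qed.

Lemma xlnxE (x : R) : 0 < x -> xlnx x = x * ln x.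
Proof. by move=> x_gt0; rewrite /xlnx gt_eqF. Qed.

(* The left-hand side is the tangent to [xlnx] at [x], evaluated at [y]. *)
Lemma xlnx_gt_tangent (x y : R) : 0 < x -> 0 <= y -> y != x ->
  y * ln x + y - x < xlnx y.
Proof.
move=> x_gt0 y_ge0 y_neq_x; have [->|y_neq0] := eqVneq y 0.
  by rewrite /xlnx eqxx mul0r add0r sub0r oppr_lt0.
have y_gt0 : 0 < y by rewrite lt_def y_neq0 y_ge0.
have xy_neq1 : x / y != 1.
  by apply: contraNneq y_neq_x => /(divr1_eq) ->.
have := ln_lt_subr1 (divr_gt0 x_gt0 y_gt0) xy_neq1.
rewrite ln_div ?posrE // xlnxE // -(ltr_pM2l y_gt0) mulrBr mulrBr mulr1.
rewrite mulrCA divff // mulr1; lra.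
Qed.

Lemma xlnx_midpoint_lt (a b : R) : 0 <= a -> 0 <= b -> a != b ->
  2 * xlnx ((a + b) / 2) < xlnx a + xlnx b.
Proof.
move=> a_ge0 b_ge0 a_neq_b; set m := (a + b) / 2.
have m_gt0 : 0 < m.
  rewrite /m divr_gt0 // lt_def paddr_eq0 // addr_ge0 // andbT.
  by apply: contraNN a_neq_b => /andP[/eqP-> /eqP->].
have a_neq_m : a != m by apply: (contraNneq _ a_neq_b); rewrite /m => ?; apply/eqP; lra.
have b_neq_m : b != m by apply: (contraNneq _ a_neq_b); rewrite /m => ?; apply/eqP; lra.
have := xlnx_gt_tangent m_gt0 a_ge0 a_neq_m.
have := xlnx_gt_tangent m_gt0 b_ge0 b_neq_m.
have two_m : 2 * m = a + b by rewrite /m mulrC divfK ?pnatr_eq0.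
rewrite (xlnxE m_gt0) mulrA two_m mulrDl; lra.
Qed.

Lemma xlnx_midpoint_le (a b : R) : 0 <= a -> 0 <= b ->
  2 * xlnx ((a + b) / 2) <= xlnx a + xlnx b.
Proof.
move=> a_ge0 b_ge0; have [<-|a_neq_b] := eqVneq a b.
  by rewrite (_ : (a + a) / 2 = a); lra.
exact/ltW/xlnx_midpoint_lt.
Qed.

Definition midpoint (P Q : assign V -> R) (v : assign V) : R := (P v + Q v) / 2.

Lemma fprob_midpoint (P Q : assign V -> R) (phi : pform V) :
  fprob (midpoint P Q) phi = (fprob P phi + fprob Q phi) / 2.
Proof. by rewrite /fprob -big_split mulr_suml. Qed.

Lemma psat_midpoint (P Q : assign V -> R) (c : pconstr R V) :
  psat P c -> psat Q c -> psat (midpoint P Q) c.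
Proof.
rewrite /psat => P_sat Q_sat; under eq_bigr do rewrite fprob_midpoint.
have -> : \sum_(t <- pcterms c) t.1 * ((fprob P t.2 + fprob Q t.2) / 2) =
    (\sum_(t <- pcterms c) t.1 * fprob P t.2
     + \sum_(t <- pcterms c) t.1 * fprob Q t.2) / 2.
  by rewrite -big_split mulr_suml; apply: eq_bigr => t _ /=; lra.
lra.
Qed.

Lemma in_Mod_midpoint (Rs : seq (pconstr R V)) (P Q : assign V -> R) :
  in_Mod Rs P -> in_Mod Rs Q -> in_Mod Rs (midpoint P Q).
Proof.
move=> [[P_ge0 P_sum1] P_sat] [[Q_ge0 Q_sum1] Q_sat]; split; first split.
- by move=> v; rewrite divr_ge0 ?addr_ge0.
- by rewrite -mulr_suml big_split /= P_sum1 Q_sum1; lra.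
- by move=> c c_in; apply: psat_midpoint; [apply: P_sat | apply: Q_sat].
Qed.

(* The midpoint of P and Q lies in Mod, and by strict convexity of [xlnx] its
   entropy would exceed that of P unless P = Q. *)
Lemma is_ME_unique (Rs : seq (pconstr R V)) (P Q : assign V -> R) :
  is_ME Rs P -> is_ME Rs Q -> P = Q.
Proof.
move=> [P_mod P_max] [Q_mod Q_max].
have [[P_ge0 _] _] := P_mod; have [[Q_ge0 _] _] := Q_mod.
set gap := fun v => xlnx (P v) + xlnx (Q v) - 2 * xlnx (midpoint P Q v).
have gap_ge0 v : 0 <= gap v by rewrite subr_ge0 xlnx_midpoint_le.
have gap_sum0 : \sum_v gap v = 0.
  apply/eqP; rewrite eq_le sumr_ge0 // andbT.
  have := Q_max _ P_mod; have := P_max _ (in_Mod_midpoint P_mod Q_mod).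
  rewrite !entropyE sumrB big_split /= -mulr_sumr; lra.
apply/funext => v; apply/eqP; apply: contraT => P_neq_Q.
have := xlnx_midpoint_lt (P_ge0 v) (Q_ge0 v) P_neq_Q.
have := @psumr_eq0P _ _ _ _ (fun v _ => gap_ge0 v) gap_sum0 v isT.
rewrite /gap; lra.
Qed.

End MaxEntropyUnique.

Lemma sum_pprob_marg (R : realType) (V : finType) (CN RN : Type)
    (P : ALCPinterp R V CN RN) (A : pred (assign V)) :
  \sum_(i | A (wval (pworld P i))) pprob P i = \sum_(v | A v) marg P v.
Proof.
rewrite (partition_big (fun i => wval (pworld P i)) A) //=.
apply: eq_bigr => v Av; apply: eq_bigl => i.
by case: eqP => [->|_]; rewrite ?Av ?andbF.
Qed.

Lemma ler_sum_subpred (R : numDomainType) (I : finType) (A B : pred I)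
    (F : I -> R) :
  (forall i, 0 <= F i) -> (forall i, A i -> B i) ->
  \sum_(i | A i) F i <= \sum_(i | B i) F i.
Proof.
move=> F_ge0 AB; rewrite [leLHS]big_mkcond [leRHS]big_mkcond ler_sum // => i _.
by case: (boolP (A i)) => [/AB ->|_] //; case: (B i).
Qed.

Section ExtremeWorlds.
Variables (R : realType) (V : finType) (CN RN : Type).
Variables (K : KB R V CN RN) (C D : concept CN RN).

Definition Tmodel (w : world V CN RN) : Prop :=
  forall g, List.In g (kbT K) -> models_gci w g.

Definition Trealizable : {pred assign V} :=
  fun v => `[< exists w, Tmodel w /\ wval w = v >].

Definition subs_attainable (b : bool) (v : assign V) : bool :=
  `[< exists w, Tmodel w /\ wval w = v /\ `[< csub w C D >] = b >].

(* The truth value of C ⊑ D in the world chosen over [v]: [b] if some T-world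
   over [v] gives it that value, otherwise necessarily [~~ b].  For [b = false]
   it says that C ⊑ D is forced at [v], for [b = true] that it is possible. *)
Definition subs_extreme (b : bool) (v : assign V) : bool :=
  if subs_attainable b v then b else ~~ b.

Lemma subs_extremeE (b : bool) (w : world V CN RN) :
  Tmodel w -> `[< csub w C D >] = b -> subs_extreme b (wval w) = b.
Proof.
move=> w_T w_b; rewrite /subs_extreme /subs_attainable.
by have /asboolP -> : exists w', Tmodel w' /\ wval w' = wval w /\ `[< csub w' C D >] = b
  by exists w.
Qed.

Lemma subs_extreme_false_csub (w : world V CN RN) :
  Tmodel w -> subs_extreme false (wval w) -> csub w C D.
Proof.
move=> w_T; apply: contraPP => /asboolPn/negbTE w_false.
by rewrite subs_extremeE.
Qed.

Lemma csub_subs_extreme_true (w : world V CN RN) :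
  Tmodel w -> csub w C D -> subs_extreme true (wval w).
Proof. by move=> w_T /asboolP w_true; rewrite subs_extremeE. Qed.

Lemma exists_extreme_world (b : bool) (v : {x in Trealizable}) :
  exists w, [/\ Tmodel w, wval w = val v & `[< csub w C D >] = subs_extreme b (val v)].
Proof.
rewrite /subs_extreme; case: (boolP (subs_attainable b _)).
  by move=> /asboolP[w [w_T [w_v w_b]]]; exists w.
move=> not_attainable; have /asboolP[w [w_T w_v]] := valP v.
exists w; split => //; apply: contraNeq not_attainable => w_neq.
apply/asboolP; exists w; do 2!split => //.
by move: w_neq; case: (`[< csub w C D >]); case: b.
Qed.

Definition extreme_world (b : bool) (v : {x in Trealizable}) : world V CN RN :=
  proj1_sig (cid (exists_extreme_world b v)).

Lemma extreme_world_T b v : Tmodel (extreme_world b v).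
Proof. by rewrite /extreme_world; case: cid => w []. Qed.

Lemma extreme_world_val b v : wval (extreme_world b v) = val v.
Proof. by rewrite /extreme_world; case: cid => w []. Qed.

Lemma extreme_world_csub b v :
  `[< csub (extreme_world b v) C D >] = subs_extreme b (val v).
Proof. by rewrite /extreme_world; case: cid => w []. Qed.

Lemma extreme_world_inj b : injective (extreme_world b).
Proof. by move=> v v' eq_w; apply: val_inj; rewrite -!(extreme_world_val b) eq_w. Qed.

Lemma marg_Trealizable (P : ALCPinterp R V CN RN) (v : assign V) :
  (forall i, Tmodel (pworld P i)) -> marg P v != 0 -> Trealizable v.
Proof.
move=> P_T; apply: contraNT => not_realizable; rewrite /marg big_pred0 // => i.
apply/negbTE/eqP => i_v; move/asboolP: not_realizable; apply.
by exists (pworld P i).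
Qed.

Variable kappa : pform V.

Definition extreme_ratio (m : assign V -> R) (b : bool) : R :=
  (\sum_(v | feval v kappa && subs_extreme b v) m v) / fprob m kappa.

Lemma PrCond_marg (P : ALCPinterp R V CN RN) :
  PrCond P C D kappa =
  (\sum_(i | feval (wval (pworld P i)) kappa && `[< csub (pworld P i) C D >])
     pprob P i) / fprob (marg P) kappa.
Proof. by rewrite /PrCond (sum_pprob_marg P (fun v => feval v kappa)). Qed.

Lemma PrCond_bounds (P : ALCPinterp R V CN RN) :
  (forall i, Tmodel (pworld P i)) ->
  extreme_ratio (marg P) false <= PrCond P C D kappa <= extreme_ratio (marg P) true.
Proof.
move=> P_T; have inv_ge0 : 0 <= (fprob (marg P) kappa)^-1.
  by rewrite invr_ge0 sumr_ge0 // => v _; rewrite sumr_ge0 // => i _; apply: pprob_ge0.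
rewrite PrCond_marg /extreme_ratio.
rewrite -(sum_pprob_marg P (fun v => feval v kappa && subs_extreme false v)).
rewrite -(sum_pprob_marg P (fun v => feval v kappa && subs_extreme true v)).
rewrite !ler_wpM2r // !ler_sum_subpred //; do ?exact: pprob_ge0.
- move=> i /andP[-> /asboolP sub]; exact: csub_subs_extreme_true (P_T i) sub.
- move=> i /andP[-> forced]; apply/asboolP.
  exact: subs_extreme_false_csub (P_T i) forced.
Qed.

Section ExtremeInterp.
Variables (m : assign V -> R) (m_ge0 : forall v, 0 <= m v)
  (m_sum1 : \sum_v m v = 1) (m_supp : forall v, m v != 0 -> Trealizable v).

Lemma sum_Trealizable (A : pred (assign V)) :
  \sum_(v : {x in Trealizable} | A (val v)) m (val v) = \sum_(v | A v) m v.
Proof.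
rewrite -big_sub_cond [RHS](bigID Trealizable) /= [X in _ = _ + X]big1 ?addr0.
  by apply: eq_bigl => v; rewrite andbC.
by move=> v /andP[_]; apply: contraNeq => /m_supp.
Qed.

Lemma extreme_pprob_ge0 (v : {x in Trealizable}) : 0 <= m (val v).
Proof. exact: m_ge0. Qed.

Lemma extreme_pprob_sum1 : \sum_(v : {x in Trealizable}) m (val v) = 1.
Proof. by rewrite -m_sum1 -(sum_Trealizable xpredT). Qed.

Definition extreme_interp (b : bool) : ALCPinterp R V CN RN :=
  ALCPInterp (@extreme_world_inj b) extreme_pprob_ge0 extreme_pprob_sum1.

Lemma marg_extreme_interp b : marg (extreme_interp b) = m.
Proof.
apply/funext => v; rewrite /marg /=; under eq_bigl do rewrite extreme_world_val.
by rewrite (sum_Trealizable (pred1 v)) big_pred1_eq.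
Qed.

Lemma PrCond_extreme_interp b :
  PrCond (extreme_interp b) C D kappa = extreme_ratio m b.
Proof.
rewrite PrCond_marg marg_extreme_interp /=.
under eq_bigl do rewrite extreme_world_csub extreme_world_val.
by rewrite (sum_Trealizable (fun v => feval v kappa && subs_extreme b v)).
Qed.

End ExtremeInterp.
End ExtremeWorlds.

Lemma inf_attained (R : realType) (E : set R) (x : R) :
  E x -> lbound E x -> inf E = x.
Proof.
move=> Ex x_lb; apply/eqP; rewrite eq_le lb_le_inf ?andbT //; last by exists x.
by apply: ge_inf => //; exists x.
Qed.

Lemma sup_attained (R : realType) (E : set R) (x : R) :
  E x -> ubound E x -> sup E = x.
Proof.
move=> Ex x_ub; apply/eqP; rewrite eq_le ge_sup //=; last by exists x.
by apply: ub_le_sup => //; exists x.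
Qed.

Theorem corollary1 (R : realType) (V : finType) (CN RN : Type)
  (K : KB R V CN RN) (C D : concept CN RN) (kappa : pform V) :
  ME_consistent K ->
  exists P Q : ALCPinterp R V CN RN,
    ME_model K P /\ ME_model K Q /\
    Bs K C D kappa = PrCond P C D kappa /\
    Bc K C D kappa = PrCond Q C D kappa.
Proof.
move=> [P0 [P0_T P0_ME]]; set m := marg P0.
have [[[m_ge0 m_sum1] _] _] := P0_ME.
have m_supp := marg_Trealizable P0_T.
pose Ext b := extreme_interp C D m_ge0 m_sum1 m_supp b.
have marg_ME P : ME_model K P -> marg P = m.
  by move=> [_ P_ME]; exact: is_ME_unique P_ME P0_ME.
have Ext_ME b : ME_model K (Ext b).
  by split; [apply: extreme_world_T | rewrite marg_extreme_interp].
have Pr_bounds P : ME_model K P ->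
    extreme_ratio K C D kappa m false <= PrCond P C D kappa
    <= extreme_ratio K C D kappa m true.
  by move=> P_ME; rewrite -(marg_ME P P_ME); apply: PrCond_bounds (proj1 P_ME).
exists (Ext false), (Ext true).
split; first exact: Ext_ME; split; first exact: Ext_ME.
split; rewrite PrCond_extreme_interp.
- apply: inf_attained; first by exists (Ext false); rewrite PrCond_extreme_interp.
  by move=> _ [P [P_ME ->]]; case/andP: (Pr_bounds P P_ME).
- apply: sup_attained; first by exists (Ext true); rewrite PrCond_extreme_interp.
  by move=> _ [P [P_ME ->]]; case/andP: (Pr_bounds P P_ME).
Qed.
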